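(* Let $s\ge 2$ and let $R,r,h$ be positive integers with $R\le r$, and assume $\mathrm{Perf}(s,r,R)\neq\emptyset$. Identify $\mathbb F_q^{s\times(r+h)}$ with $\mathbb F_q^{s\times r}\times\mathbb F_q^{s\times h}$, writing $x=(x',x'')$ (the first $r$ columns and the last $h$ columns). For any function $f:\mathbb F_q^{s\times h}\to\mathrm{Perf}(s,r,R)$, the code $C_f=\{(c',c''): c''\in\mathbb F_q^{s\times h},\ c'\in f(c'')\}$ belongs to $\mathrm{Perf}(s,r+h,R)$. Conversely, every $C\in\mathrm{Perf}(s,r+h,R)$ is of the form $C_f$ for some function $f:\mathbb F_q^{s\times h}\to\mathrm{Perf}(s,r,R)$ (namely $f(c'')=\{c'\in\mathbb F_q^{s\times r}:(c',c'')\in C\}$).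
   Context: $q$ is a prime power, $\mathbb F_q^{s\times n}$ the set of $s\times n$ matrices over $\mathbb F_q$ with rows in $\mathbb F_q^{1\times n}$. For a row $y=(y_1,\dots,y_n)$, the NRT weight is $w(y)=\max\{j: y_j\neq 0\}$ if $y\ne0$ and $w(0)=0$; for a matrix, $w(x)=\sum_i w(x_i)$. The NRT metric is $d(x,y)=w(x-y)$; $B(c,R)=\{x: d(x,c)\le R\}$. A code $C\subseteq\mathbb F_q^{s\times n}$ is $R$-perfect if the balls $B(c,R)$, $c\in C$, are pairwise disjoint and cover $\mathbb F_q^{s\times n}$; non-trivial means $|C|>1$ and $C\ne\mathbb F_q^{s\times n}$. $\mathrm{Perf}(s,n,R)$ denotes the set of non-trivial $R$-perfect codes in $\mathbb F_q^{s\times n}$. *)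

From mathcomp Require Import all_boot all_order all_algebra.
Set Implicit Arguments. Unset Strict Implicit. Unset Printing Implicit Defensive.
Import GRing.Theory.
Local Open Scope ring_scope.

Definition nrt_row_weight (F : finFieldType) (n : nat) (y : 'rV[F]_n) : nat :=
  \max_(j < n | y 0 j != 0) j.+1.

Definition nrt_weight (F : finFieldType) (s n : nat) (x : 'M[F]_(s, n)) : nat :=
  (\sum_(i < s) nrt_row_weight (row i x))%N.

Definition nrt_dist (F : finFieldType) (s n : nat) (x y : 'M[F]_(s, n)) : nat :=
  nrt_weight (x - y).

Definition nrt_ball (F : finFieldType) (s n : nat) (c : 'M[F]_(s, n)) (R : nat)
  : {set 'M[F]_(s, n)} := [set x | (nrt_dist x c <= R)%N].

Definition perfect_code (F : finFieldType) (s n R : nat) (C : {set 'M[F]_(s, n)}) : Prop :=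
  (forall c1 c2, c1 \in C -> c2 \in C -> c1 != c2 ->
     [disjoint nrt_ball c1 R & nrt_ball c2 R]) /\
  (forall x : 'M[F]_(s, n), exists2 c, c \in C & x \in nrt_ball c R).

Definition in_Perf (F : finFieldType) (s n R : nat) (C : {set 'M[F]_(s, n)}) : Prop :=
  perfect_code R C /\ (1 < #|C|)%N /\ C != [set: 'M[F]_(s, n)].

Definition code_of_fun (F : finFieldType) (s r h : nat)
  (f : 'M[F]_(s, h) -> {set 'M[F]_(s, r)}) : {set 'M[F]_(s, r + h)} :=
  [set x | lsubmx x \in f (rsubmx x)].

Definition fibre_fun (F : finFieldType) (s r h : nat) (C : {set 'M[F]_(s, r + h)})
  (c'' : 'M[F]_(s, h)) : {set 'M[F]_(s, r)} :=
  [set c' | row_mx c' c'' \in C].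

From mathcomp Require Import all_boot all_order all_algebra.
Set Implicit Arguments. Unset Strict Implicit. Unset Printing Implicit Defensive.
Import GRing.Theory.
Local Open Scope ring_scope.

(* Appending h nonzero columns on the right costs more than r in NRT weight, so
   for R <= r an R-ball around (c', c'') only meets the layer x'' = c'', where it
   is the R-ball around c' in F^(s x r).  Hence the balls of a code in
   F^(s x (r+h)) decompose layer by layer into the balls of its fibres, and a
   code is R-perfect iff all of its fibres are.  Non-triviality is automatic:
   for s >= 2 and 0 < R <= r a single ball misses the all-ones matrix (weight
   s r > R), and the whole space is not perfect since the balls of 0 and of a
   matrix of weight 1 overlap. *)

Section Weight.

Variable F : finFieldType.

Lemma nrt_weight0 s n : nrt_weight (0 : 'M[F]_(s, n)) = 0%N.
Proof.
rewrite /nrt_weight big1 // => i _; apply/eqP; rewrite -leqn0.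
by apply/bigmax_leqP => j; rewrite !mxE eqxx.
Qed.

Lemma nrt_weight_row_mx0 s r h (a : 'M[F]_(s, r)) :
  nrt_weight (row_mx a (0 : 'M[F]_(s, h))) = nrt_weight a.
Proof.
rewrite /nrt_weight; apply: eq_bigr => i _.
rewrite row_row_mx /nrt_row_weight big_split_ord /=.
rewrite [X in maxn _ X]big_pred0 ?maxn0; last by move=> j; rewrite row_mxEr !mxE eqxx.
by apply: eq_bigl => j; rewrite row_mxEl.
Qed.

Lemma nrt_weight_row_mx_gt s r h (a : 'M[F]_(s, r)) (b : 'M[F]_(s, h)) :
  b != 0 -> (r < nrt_weight (row_mx a b))%N.
Proof.
move=> bn0; have [[i j] /= bij] : exists ij : 'I_s * 'I_h, b ij.1 ij.2 != 0.
  apply/existsP; apply: contraR bn0 => /existsPn b0.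
  by apply/eqP/matrixP => i j; rewrite mxE; apply/eqP; have /negPn := b0 (i, j).
rewrite /nrt_weight (bigD1 i) //=; apply: leq_trans (leq_addr _ _).
apply: leq_trans (leq_bigmax_cond (F := fun k : 'I_(r + h) => k.+1) (rshift r j) _).
  by rewrite ltnS leq_addr.
by rewrite mxE row_mxEr.
Qed.

Lemma nrt_ball_row_mx s r h R (a c : 'M[F]_(s, r)) (b d : 'M[F]_(s, h)) :
  (R <= r)%N ->
  (row_mx a b \in nrt_ball (row_mx c d) R) = (b == d) && (a \in nrt_ball c R).
Proof.
move=> leRr; rewrite !inE /nrt_dist opp_row_mx add_row_mx.
have [->|neq_bd] := eqVneq b d; first by rewrite subrr nrt_weight_row_mx0.
apply/negbTE; rewrite -ltnNge; apply: leq_ltn_trans leRr (nrt_weight_row_mx_gt _ _).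
by rewrite subr_eq0.
Qed.

Lemma nrt_weight_const1 s n :
  (s * n <= nrt_weight (const_mx (1%R : F) : 'M[F]_(s, n)))%N.
Proof.
case: n => [|n]; first by rewrite muln0.
rewrite /nrt_weight -[s in (s * _)%N]card_ord -sum_nat_const.
apply: leq_sum => i _.
by apply: (leq_bigmax_cond (F := fun j : 'I_n.+1 => j.+1) ord_max); rewrite !mxE oner_neq0.
Qed.

Lemma nrt_weight_delta_mx s n (i0 : 'I_s) (j0 : 'I_n) :
  (nrt_weight (delta_mx i0 j0 : 'M[F]_(s, n)) <= j0.+1)%N.
Proof.
rewrite /nrt_weight (bigD1 i0) //= big1 ?addn0.
  apply/bigmax_leqP => j; rewrite !mxE eqxx /=.
  by have [->|_] := eqVneq j j0; rewrite ?mulr0n ?eqxx.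
move=> i ne_i; apply/eqP; rewrite -leqn0; apply/bigmax_leqP => j.
by rewrite !mxE (negbTE ne_i) mulr0n eqxx.
Qed.

End Weight.

Section NonTrivial.

Variables (F : finFieldType) (s n R : nat).
Hypotheses (le2s : (2 <= s)%N) (gt0R : (0 < R)%N) (leRn : (R <= n)%N).

Lemma perfect_code_card_gt1 (C : {set 'M[F]_(s, n)}) :
  perfect_code R C -> (1 < #|C|)%N.
Proof.
move=> [_ cover]; have [c Cc _] := cover 0.
have [c' Cc' ball_c'] := cover (const_mx 1 + c).
apply/card_gt1P; exists c', c; split=> //; apply: contraTneq ball_c' => ->.
rewrite inE /nrt_dist addrK -ltnNge.
apply: leq_trans (nrt_weight_const1 _ _ _).
by rewrite (leq_ltn_trans leRn) // ltn_Pmull // (leq_trans gt0R leRn).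
Qed.

Lemma perfect_code_neq_setT (C : {set 'M[F]_(s, n)}) :
  perfect_code R C -> C != setT.
Proof.
move=> [disj _]; apply/eqP => CT.
have i0 : 'I_s := Ordinal (leq_trans (isT : (0 < 2)%N) le2s).
pose j0 : 'I_n := Ordinal (leq_trans gt0R leRn).
set d := - delta_mx i0 j0 : 'M[F]_(s, n).
have ne_0d : 0 != d.
  apply/eqP => /matrixP /(_ i0 j0); rewrite !mxE !eqxx /= => /eqP.
  by rewrite eq_sym oppr_eq0 oner_eq0.
have := disjointFr (disj 0 d _ _ ne_0d) (x := 0); rewrite CT !inE.
rewrite /nrt_dist subrr opprK add0r nrt_weight0 => /(_ isT isT isT).
by rewrite (leq_trans (nrt_weight_delta_mx _ _ _)).
Qed.

Lemma perfect_code_in_Perf (C : {set 'M[F]_(s, n)}) :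
  perfect_code R C -> in_Perf R C.
Proof.
by move=> PC; split; last split; [| apply: perfect_code_card_gt1 | apply: perfect_code_neq_setT].
Qed.

End NonTrivial.

Section Fibres.

Variables (F : finFieldType) (s r h R : nat).
Hypothesis leRr : (R <= r)%N.

Lemma code_of_fibre_fun (C : {set 'M[F]_(s, r + h)}) :
  code_of_fun (fibre_fun C) = C.
Proof. by apply/setP => x; rewrite !inE hsubmxK. Qed.

Lemma perfect_code_of_fun (f : 'M[F]_(s, h) -> {set 'M[F]_(s, r)}) :
  (forall c'', perfect_code R (f c'')) -> perfect_code R (code_of_fun f).
Proof.
move=> perf_f; split.
  move=> c1 c2; rewrite -(hsubmxK c1) -(hsubmxK c2) !inE !row_mxKl !row_mxKr.
  move: (lsubmx c1) (rsubmx c1) (lsubmx c2) (rsubmx c2) => a1 b1 a2 b2 f_a1 f_a2 ne_12.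
  apply/pred0P => x /=; rewrite -(hsubmxK x) !nrt_ball_row_mx //.
  apply/negbTE/negP => /andP[/andP[/eqP eq_b1 B1] /andP[/eqP eq_b2 B2]].
  move: f_a1 f_a2 ne_12; rewrite -eq_b1 -eq_b2 => f_a1 f_a2 ne_12.
  have ne_a12 : a1 != a2 by apply: contra_neq ne_12 => ->.
  have [disj _] := perf_f (rsubmx x).
  by have := disjointFr (disj _ _ f_a1 f_a2 ne_a12) B1; rewrite B2.
move=> x; have [_ cover] := perf_f (rsubmx x).
have [c fc ball_c] := cover (lsubmx x).
exists (row_mx c (rsubmx x)); first by rewrite inE row_mxKl row_mxKr.
by rewrite -{1}(hsubmxK x) nrt_ball_row_mx // eqxx.
Qed.

Lemma perfect_code_fibre_fun (C : {set 'M[F]_(s, r + h)}) c'' :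
  perfect_code R C -> perfect_code R (fibre_fun C c'').
Proof.
move=> [disj cover]; split.
  move=> a1 a2; rewrite !inE => C1 C2 ne_a12.
  have ne_12 : row_mx a1 c'' != row_mx a2 c'' by apply: contra_neq ne_a12 => /eq_row_mx[].
  apply/pred0P => x /=; apply/negbTE/negP => /andP[B1 B2].
  have := disjointFr (disj _ _ C1 C2 ne_12) (x := row_mx x c'').
  by rewrite !nrt_ball_row_mx // eqxx B1 B2 => /(_ isT).
move=> x; have [c Cc] := cover (row_mx x c'').
rewrite -(hsubmxK c) nrt_ball_row_mx // => /andP[/eqP eq_c'' ball_c].
by exists (lsubmx c); rewrite // inE eq_c'' hsubmxK.
Qed.

End Fibres.

Theorem mainTheorem11 (F : finFieldType) (s r h R : nat) :
  (2 <= s)%N -> (0 < R)%N -> (R <= r)%N -> (0 < h)%N ->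
  (exists C0 : {set 'M[F]_(s, r)}, in_Perf R C0) ->
  (forall f : 'M[F]_(s, h) -> {set 'M[F]_(s, r)},
     (forall c'', in_Perf R (f c'')) -> in_Perf R (code_of_fun f)) /\
  (forall C : {set 'M[F]_(s, r + h)}, in_Perf R C ->
     (forall c'', in_Perf R (fibre_fun C c'')) /\ C = code_of_fun (fibre_fun C)).
Proof.
move=> le2s gt0R leRr _ _; split.
  move=> f perf_f; apply: perfect_code_in_Perf => //; first exact: leq_trans leRr (leq_addr _ _).
  by apply: perfect_code_of_fun => // c''; have [] := perf_f c''.
move=> C [perf_C _]; split; last by rewrite code_of_fibre_fun.
by move=> c''; apply: perfect_code_in_Perf => //; apply: perfect_code_fibre_fun.
Qed.
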